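(* Let $G$ be an ordered graph, and let $k,\ell \in \mathbb{N}$. If the irreducible block decomposition of $G$ contains at least $k$ blocks of order at least $\ell$, then $S_n(G) \geqslant F_{n,\ell}$ for each $n \leqslant k$.
   Context: Ordered graphs of order $n$ have vertex set $[n]$ with the natural order. A pair of vertices $u<v$ separates the edges of $G$ if every edge $ij$ ($i<j$) has $j\leqslant u$ or $v\leqslant i$; $G$ is irreducible if no pair separates its edges. For ordered graphs $G_1,\dots,G_m$, $G_1+\dots+G_m$ is the ordered graph obtained by placing copies of $G_1,\dots,G_m$ consecutively from left to right with no edges between copies. Every ordered graph $G$ can be written uniquely as $G=G_1+\dots+G_m$ with each $G_i$ irreducible; $(G_1,\dots,G_m)$ is its irreducible block decomposition and the $G_i$ are its irreducible blocks. $S_n(G)$ is the number of distinct (non-isomorphic as ordered graphs) induced ordered subgraphs of $G$ of order $n$. $F_{n,\ell}$: $F_{n,\ell}=0$ for $n<0$, $F_{0,\ell}=1$, $F_{n,\ell}=F_{n-1,\ell}+\dots+F_{n-\ell,\ell}$ for $n\geqslant1$. *)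

From mathcomp Require Import all_boot.
Set Implicit Arguments. Unset Strict Implicit. Unset Printing Implicit Defensive.

(* An ordered graph of order n: vertex set 'I_n = {0,..,n-1} (the paper's [n],
   shifted by one) with its natural order; an edge ij (i<j) is stored as the
   pair (i, j). *)
Record ograph := OG { ord : nat; edg : {set 'I_ord * 'I_ord} }.

Definition wf (G : ograph) : bool := [forall p in edg G, (p.1 < p.2)%N].

Definition adjn (G : ograph) (i j : nat) : bool :=
  [exists p in edg G, (val p.1 == i) && (val p.2 == j)].

Definition osum (G H : ograph) : ograph :=
  OG [set p : 'I_(ord G + ord H) * 'I_(ord G + ord H) |
        adjn G p.1 p.2 ||
        [&& ord G <= p.1, ord G <= p.2 & adjn H (p.1 - ord G) (p.2 - ord G)]].

Definition oempty : ograph := @OG 0 set0.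

Definition osums (Gs : seq ograph) : ograph := foldr osum oempty Gs.

Definition separates (G : ograph) (u v : 'I_(ord G)) : bool :=
  (u < v) && [forall p in edg G, (p.2 <= u) || (v <= p.1)].

Definition irreducible (G : ograph) : bool :=
  ~~ [exists u : 'I_(ord G), exists v : 'I_(ord G), @separates G u v].

Definition block_decomposition (G : ograph) (Gs : seq ograph) : Prop :=
  G = osums Gs /\ all (fun H => [&& wf H, irreducible H & 0 < ord H]) Gs.

(* strictly increasing embeddings 'I_m -> 'I_n (= m-subsets of [n]) *)
Definition incr m n (f : {ffun 'I_m -> 'I_n}) : bool :=
  [forall i : 'I_m, forall j : 'I_m, (i < j) ==> (f i < f j)].

Definition induced (G : ograph) m (f : {ffun 'I_m -> 'I_(ord G)}) :
  {set 'I_m * 'I_m} := [set p | (f p.1, f p.2) \in edg G].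

(* S_m(G): number of distinct (= non-isomorphic, since ordered graphs on
   the same [m] are isomorphic iff equal) induced ordered subgraphs of order m *)
Definition S (m : nat) (G : ograph) : nat :=
  #|[set @induced G m f | f in [pred f : {ffun 'I_m -> 'I_(ord G)} | @incr m (ord G) f]]|.

(* Fseq l n = [:: F_{n,l}; F_{n-1,l}; ...; F_{0,l}] *)
Fixpoint Fseq (l n : nat) : seq nat :=
  match n with
  | 0 => [:: 1]
  | n'.+1 => let s := Fseq l n' in sumn (take l s) :: s
  end.

Definition F (n l : nat) : nat := head 0 (Fseq l n).

Example F_test : [seq F n 2 | n <- iota 0 7] = [:: 1; 1; 2; 3; 5; 8; 13]. Proof. by []. Qed.

From mathcomp Require Import all_boot zify.
Set Implicit Arguments. Unset Strict Implicit. Unset Printing Implicit Defensive.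

(* Write G = H + G' with H the first irreducible block.  If ord H >= l, then for
   every a <= l the block H has an irreducible induced subgraph P_a of order a,
   found by growing a vertex set one vertex at a time while keeping every cut
   between two of its vertices crossed by an edge inside it.  The graphs P_a + E,
   with E an induced subgraph of G' of order n - a, are induced subgraphs of G,
   and they are pairwise distinct: for a < b, the irreducible P_b has an edge
   across the cut between the vertices a - 1 and a, while P_a + E has none.
   Hence S_n(G) >= sum_(1 <= a <= min(l, n)) S_(n-a)(G'), which is the recurrence
   of F_(n,l); a block of order < l still gives S_n(G) >= S_n(G'). *)

Lemma leq_sum_card_disjoint (T : finType) (U : {set T}) (A : nat -> {set T}) m n :
  (forall i, m <= i < n -> A i \subset U) ->
  (forall i j, m <= i -> i < j -> j < n -> [disjoint A i & A j]) ->
  \sum_(m <= i < n) #|A i| <= #|U|.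
Proof.
elim: n U => [|n IH] U sub_AU disjA; first by rewrite big_geq.
have [le_mn | lt_nm] := leqP m n; last by rewrite big_geq.
have sub_AnU : A n \subset U by apply: sub_AU; lia.
rewrite big_nat_recr //= -(cardsID (A n) U) (setIidPr sub_AnU) addnC leq_add2l.
apply: IH => [i lt_i | i j le_mi lt_ij lt_jn]; last by apply: disjA; lia.
by rewrite subsetD sub_AU /=; [apply: disjA | ]; lia.
Qed.

Lemma geq_ordF k (x : 'I_k) : (k <= x) = false.
Proof. by rewrite leqNgt ltn_ord. Qed.

Lemma exists_boundary L (X : {set 'I_L}) x y : x \in X -> y \notin X ->
  exists u v : 'I_L, v = u.+1 :> nat /\ (u \in X) != (v \in X).
Proof.
move=> Xx Xy.
case: (boolP [exists u : 'I_L, exists v : 'I_L,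
                 (val v == u.+1) && ((u \in X) != (v \in X))]).
  by case/existsP => u /existsP [v /andP [/eqP vu uXv]]; exists u, v.
move=> /existsPn no_boundary; exfalso.
have lt_0L : 0 < L by have := ltn_ord x; lia.
have constX k (lt_kL : k < L) : (Ordinal lt_kL \in X) = (Ordinal lt_0L \in X).
  elim: k lt_kL => [|k IH] lt_kL; first by congr (_ \in X); apply: val_inj.
  have lt_k : k < L by lia.
  move/existsPn/(_ (Ordinal lt_kL)): (no_boundary (Ordinal lt_k)).
  by rewrite /= eqxx negbK -(IH lt_k) => /eqP.
case: x Xx => x lt_x; case: y Xy => y lt_y.
by rewrite (constX x lt_x) (constX y lt_y) => /negbTE ->.
Qed.

Lemma adjnE G (x y : 'I_(ord G)) : adjn G x y = ((x, y) \in edg G).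
Proof.
apply/existsP/idP => [[[u v]] /= /and3P [uv /eqP/val_inj eq_ux /eqP/val_inj eq_vy] | xy].
  by rewrite -eq_ux -eq_vy.
by exists (x, y); rewrite xy !eqxx.
Qed.

Lemma adjn_ltn G i j : adjn G i j -> (i < ord G) && (j < ord G).
Proof. by case/existsP => -[u v] /and3P [_ /eqP <- /eqP <-]; rewrite !ltn_ord. Qed.

Lemma adjn_geql G i j : ord G <= i -> adjn G i j = false.
Proof. by move=> le_G; apply: contraTF le_G => /adjn_ltn; lia. Qed.

Lemma adjn_geqr G i j : ord G <= j -> adjn G i j = false.
Proof. by move=> le_G; apply: contraTF le_G => /adjn_ltn; lia. Qed.

Lemma adjn_osum H G i j :
  adjn (osum H G) i j =
  adjn H i j || [&& ord H <= i, ord H <= j & adjn G (i - ord H) (j - ord H)].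
Proof.
apply/idP/idP => [/existsP [[u v]] /and3P [] | adj_ij].
  by rewrite inE => + /eqP <- /eqP <-.
have /andP [lt_i lt_j] : (i < ord H + ord G) && (j < ord H + ord G).
  by case/orP: adj_ij => [/adjn_ltn | /and3P [? ? /adjn_ltn]]; lia.
by apply/existsP; exists (Ordinal lt_i, Ordinal lt_j); rewrite inE adj_ij !eqxx.
Qed.

Lemma adjn_induced G m (f : {ffun 'I_m -> 'I_(ord G)}) (x y : 'I_m) :
  adjn (OG (induced f)) x y = adjn G (f x) (f y).
Proof. by rewrite (@adjnE (OG _)) adjnE inE. Qed.

Lemma incrP m n (f : {ffun 'I_m -> 'I_n}) : reflect {homo f : i j / i < j} (incr f).
Proof.
apply: (iffP forallP) => [incr_f i j lt_ij | homo_f i].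
  by move/forallP/(_ j)/implyP: (incr_f i); apply.
by apply/forallP => j; apply/implyP/homo_f.
Qed.

Lemma incr_leq m n (f : {ffun 'I_m -> 'I_n}) (i j : 'I_m) :
  incr f -> i <= j -> f i <= f j.
Proof.
move=> /incrP homo_f; rewrite leq_eqVlt => /predU1P [/val_inj -> // | /homo_f].
exact: ltnW.
Qed.

Definition subgraphs m (G : ograph) : {set {set 'I_m * 'I_m}} :=
  [set induced f | f in [pred f : {ffun 'I_m -> 'I_(ord G)} | incr f]].

Lemma S_card m G : S m G = #|subgraphs m G|.
Proof. by []. Qed.

Lemma mem_subgraphs0 G (P : {set 'I_0 * 'I_0}) : P \in subgraphs 0 G.
Proof.
apply/imsetP; exists (ffun0 (card_ord 0)); first by apply/forallP => -[].
by apply/setP => -[[]].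
Qed.

Lemma S0_gt0 G : 0 < S 0 G.
Proof. by rewrite S_card; apply/card_gt0P; exists set0; apply: mem_subgraphs0. Qed.

Section Linked.

Variables (L : nat) (e : {set 'I_L * 'I_L}).

(* X is linked iff the ordered subgraph induced on X is irreducible. *)
Definition crossed (X : {set 'I_L}) (c : nat) : Prop :=
  exists i j, [/\ i \in X, j \in X, (i, j) \in e & i <= c < j].

Definition linked (X : {set 'I_L}) : Prop :=
  forall x y, x \in X -> y \in X -> forall c, x <= c < y -> crossed X c.

Lemma crossedS (X Y : {set 'I_L}) c : X \subset Y -> crossed X c -> crossed Y c.
Proof.
by move=> /subsetP sXY [i [j [Xi Xj eij icj]]]; exists i, j; split; rewrite ?sXY.
Qed.

Lemma linked1 x : linked [set x].
Proof. by move=> u v; rewrite !inE => /eqP -> /eqP -> c xcx; exfalso; lia. Qed.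

Lemma linked_span (i j : 'I_L) (Y : {set 'I_L}) :
  (i, j) \in e -> i \in Y -> j \in Y -> {in Y, forall y : 'I_L, i <= y <= j} -> linked Y.
Proof.
move=> eij Yi Yj in_ij x y Yx Yy c xcy; exists i, j; split=> //.
by have := in_ij x Yx; have := in_ij y Yy; lia.
Qed.

Lemma linked_setU (X Y : {set 'I_L}) z :
  linked X -> linked Y -> z \in X -> z \in Y -> linked (X :|: Y).
Proof.
move=> linX linY Xz Yz x y; rewrite !inE => XYx XYy c xcy.
have [lt_cz | le_zc] := ltnP c z.
  case/orP: XYx => [Xx | Yx].
    by apply: crossedS (subsetUl X Y) (linX x z Xx Xz c _); lia.
  by apply: crossedS (subsetUr X Y) (linY x z Yx Yz c _); lia.
case/orP: XYy => [Xy | Yy].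
  by apply: crossedS (subsetUl X Y) (linX z y Xz Xy c _); lia.
by apply: crossedS (subsetUr X Y) (linY z y Yz Yy c _); lia.
Qed.

Lemma linked_setU1 (X : {set 'I_L}) x y (v : 'I_L) :
  linked X -> x \in X -> y \in X -> x <= v <= y -> linked (v |: X).
Proof.
move=> linX Xx Xy xvy u w; rewrite !inE => Xu Xw c ucw.
apply: crossedS (subsetUr _ _) _.
case/predU1P: Xu => [eq_uv | Xu]; case/predU1P: Xw => [eq_wv | Xw].
- by exfalso; move: ucw; rewrite eq_uv eq_wv; lia.
- by apply: (linX x w) => //; move: ucw; rewrite eq_uv; lia.
- by apply: (linX u y) => //; move: ucw; rewrite eq_wv; lia.
- exact: linX u w Xu Xw c ucw.
Qed.

Lemma linked_edge (i j : 'I_L) : (i, j) \in e -> i <= j -> linked [set i; j].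
Proof.
move=> eij le_ij; apply: (linked_span eij); rewrite ?inE ?eqxx ?orbT //.
by move=> y; rewrite !inE => /orP [] /eqP ->; rewrite leqnn ?le_ij.
Qed.

Definition convex (X : {set 'I_L}) : Prop :=
  forall x y v : 'I_L, x \in X -> y \in X -> x <= v <= y -> v \in X.

(* The cut u, v lies at the boundary of the interval X and is crossed by (i, j):
   either one endpoint is in X and the other can be added, or X lies strictly
   between i and j and any one of its vertices can be traded for both. *)
Lemma linked_grow_across (X : {set 'I_L}) (u v i j : 'I_L) :
  linked X -> convex X -> v = u.+1 :> nat -> (u \in X) != (v \in X) ->
  (i, j) \in e -> i <= u < j -> exists2 Y, linked Y & #|Y| = #|X|.+1.
Proof.
move=> linX convX vu uXv eij /andP [iu uj].
have lt_ij : i < j := leq_ltn_trans iu uj.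
have neq_ij : (i == j) = false by rewrite -val_eqE ltn_eqF.
have uvij : (i <= u <= j) && (i <= v <= j) by rewrite iu (ltnW uj) vu (leqW iu).
have not_both : ~~ ((i \in X) && (j \in X)).
  apply/negP => /andP [Xi Xj]; move: uXv.
  by case/andP: uvij => /(convX i j u Xi Xj) -> /(convX i j v Xi Xj) ->.
case/boolP: ((i \in X) || (j \in X)) => [Xij | /norP [Xi Xj]].
  exists (i |: (j |: X)); last first.
    rewrite !cardsU1 !inE neq_ij /=.
    by case: (i \in X) (j \in X) not_both Xij => [] [].
  rewrite setUA; have lin_ij := linked_edge eij (ltnW lt_ij).
  case/orP: Xij => [Xi | Xj].
    by apply: (linked_setU lin_ij linX _ Xi); rewrite !inE eqxx.
  by apply: (linked_setU lin_ij linX _ Xj); rewrite !inE eqxx orbT.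
have [b Xb /andP [ib bj]] : exists2 b, b \in X & i <= b <= j.
  case/andP: uvij => iuj ivj; case/boolP: (u \in X) => Xu; first by exists u.
  by exists v => //; move: uXv; rewrite (negbTE Xu); case: (v \in X).
have inside y : y \in X -> i < y < j.
  move=> Xy; rewrite ltnNge [y < j]ltnNge; apply/andP; split.
    by apply: contraNN Xi => yi; apply: (convX y b) => //; rewrite yi.
  by apply: contraNN Xj => jy; apply: (convX b y) => //; rewrite bj.
have [x Xx] : exists x, x \in X.
  by apply/set0Pn; apply: contraNneq uXv => ->; rewrite !inE.
exists (i |: (j |: (X :\ x))).
  apply: (linked_span eij) => [|| y]; rewrite !inE ?eqxx ?orbT //.
  case/or3P => [/eqP -> | /eqP -> | /andP [_ /inside /andP [iy yj]]].
  - by rewrite leqnn (ltnW lt_ij).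
  - by rewrite leqnn (ltnW lt_ij).
  - by rewrite (ltnW iy) (ltnW yj).
by rewrite !cardsU1 !inE neq_ij (negbTE Xi) (negbTE Xj) !andbF (cardsD1 x X) Xx.
Qed.

Hypothesis linkedT : linked setT.

Lemma linked_grow (X : {set 'I_L}) : linked X -> 0 < #|X| < L ->
  exists2 Y, linked Y & #|Y| = #|X|.+1.
Proof.
move=> linX /andP [X_gt0 X_ltL].
case: (boolP [exists x in X, exists y in X,
                 exists v : 'I_L, [&& x <= v, v <= y & v \notin X]]).
  case/existsP => x /andP [Xx /existsP [y /andP [Xy /existsP [v /and3P [xv vy Xv]]]]].
  exists (v |: X); last by rewrite cardsU1 Xv.
  by apply: (linked_setU1 linX Xx Xy); rewrite xv.
move=> /existsPn no_gap.
have convX : convex X.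
  move=> x y v Xx Xy /andP [xv vy]; move: (no_gap x); rewrite Xx /=.
  by move=> /existsPn /(_ y); rewrite Xy /= => /existsPn /(_ v); rewrite xv vy negbK.
have [x Xx] : exists x, x \in X by apply/card_gt0P.
have /subsetPn [w _ Xw] : ~~ ([set: 'I_L] \subset X).
  by apply: contraTN X_ltL => /subset_leq_card; rewrite cardsT card_ord -leqNgt.
have [u [v [vu uXv]]] := exists_boundary Xx Xw.
have [i [j [_ _ eij iuj]]] : crossed setT u.
  by apply: (linkedT (in_setT u) (in_setT v)); rewrite leqnn vu /=.
exact: linked_grow_across linX convX vu uXv eij iuj.
Qed.

Lemma linked_card a : 0 < a <= L -> exists2 X, linked X & #|X| = a.
Proof.
elim: a => [// | a IH] /andP [_ lt_aL].
have [-> | a_gt0] := posnP a.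
  by exists [set Ordinal lt_aL]; [exact: linked1 | rewrite cards1].
have [X linX cardX] : exists2 X, linked X & #|X| = a by apply: IH; rewrite a_gt0 ltnW.
have [Y linY cardY] : exists2 Y, linked Y & #|Y| = #|X|.+1.
  by apply: linked_grow; rewrite // cardX a_gt0.
by exists Y; rewrite // cardY cardX.
Qed.

End Linked.

Lemma irreducibleP G : reflect (linked (edg G) setT) (irreducible G).
Proof.
apply: (iffP idP) => [irrG x y _ _ c xcy | linG].
  have lt_c1 : c.+1 < ord G by have := ltn_ord y; lia.
  move/existsPn/(_ (Ordinal (ltnW lt_c1)))/existsPn/(_ (Ordinal lt_c1)): irrG.
  rewrite /separates /= ltnSn => /forallPn [[i j]] /=.
  rewrite negb_imply negb_or -!ltnNge => /andP [eij /andP [ci ic]].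
  by exists i, j; split; rewrite ?in_setT //; lia.
apply/existsPn => u; apply/existsPn => v; apply/negP => /andP [uv /forallP sep].
have [i [j [_ _ eij /andP [iu uj]]]] : crossed (edg G) setT u.
  by apply: (linG u v); rewrite ?in_setT ?leqnn.
by move: (sep (i, j)); rewrite eij /=; lia.
Qed.

Lemma sorted_enum_ord L (X : {set 'I_L}) : sorted (relpre val ltn) (enum X).
Proof.
rewrite /enum_mem -enumT; apply: sorted_filter; first by move=> u v w /=; apply: ltn_trans.
by rewrite -sorted_map val_enum_ord iota_ltn_sorted.
Qed.

Definition sorted_enum L (X : {set 'I_L}) : {ffun 'I_#|X| -> 'I_L} :=
  [ffun i => enum_val i].

Lemma incr_sorted_enum L (X : {set 'I_L}) : incr (sorted_enum X).
Proof.
apply/incrP => i j lt_ij; have x0 : 'I_L := enum_val i.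
rewrite !ffunE !(enum_val_nth x0).
have ltn_trans_val : transitive (relpre (val : 'I_L -> nat) ltn).
  by move=> ? ? ?; apply: ltn_trans.
by apply: (sorted_ltn_nth ltn_trans_val x0 (sorted_enum_ord X)); rewrite ?inE -?cardE.
Qed.

Lemma sorted_enum_onto L (X : {set 'I_L}) x : x \in X -> exists i, x = sorted_enum X i.
Proof. by move=> Xx; exists (enum_rank_in Xx x); rewrite ffunE enum_rankK_in. Qed.

Lemma irreducible_sorted_enum G (X : {set 'I_(ord G)}) :
  linked (edg G) X -> irreducible (OG (induced (sorted_enum X))).
Proof.
move=> linX; apply/irreducibleP => x y _ _ c xcy.
have lt_c1 : c.+1 < #|X| by have : y < #|X| := ltn_ord y; lia.
pose cu : 'I_#|X| := Ordinal (ltnW lt_c1); pose cv : 'I_#|X| := Ordinal lt_c1.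
have /incrP incr_g := incr_sorted_enum X.
have [i [j [Xi Xj eij /andP [i_le j_gt]]]] : crossed (edg G) X (sorted_enum X cu).
  have in_X k : sorted_enum X k \in X by rewrite ffunE enum_valP.
  by apply: (linX _ _ (in_X cu) (in_X cv)); rewrite leqnn incr_g //= ltnSn.
have [i' def_i] := sorted_enum_onto Xi; have [j' def_j] := sorted_enum_onto Xj.
exists i', j'; split; rewrite ?in_setT ?inE -?def_i -?def_j //.
apply/andP; split.
  by rewrite leqNgt; apply: contraTN i_le => lt_ci; rewrite -ltnNge def_i incr_g.
rewrite ltnNge; apply: contraTN j_gt => le_jc.
by rewrite -leqNgt def_j incr_leq ?incr_sorted_enum.
Qed.

Lemma irreducible_subgraph H a : irreducible H -> 0 < a <= ord H ->
  exists2 P, P \in subgraphs a H & irreducible (OG P).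
Proof.
move=> /irreducibleP linH /(linked_card linH) [X linX <-].
exists (induced (sorted_enum X)); last exact: irreducible_sorted_enum.
by apply/imsetP; exists (sorted_enum X); rewrite ?inE ?incr_sorted_enum.
Qed.

(* The edge set of P + E, relabelled on 'I_n so that the graphs P_a + E for
   different a live in one type. *)
Definition sum_edges n a (P : {set 'I_a * 'I_a}) (E : {set 'I_(n - a) * 'I_(n - a)}) :
  {set 'I_n * 'I_n} := [set p : 'I_n * 'I_n | adjn (osum (OG P) (OG E)) p.1 p.2].

Lemma mem_sum_edgesr n a P E (p1 p2 : 'I_n) (q1 q2 : 'I_(n - a)) :
  p1 = a + q1 :> nat -> p2 = a + q2 :> nat ->
  ((p1, p2) \in @sum_edges n a P E) = ((q1, q2) \in E).
Proof.
move=> eq_p1 eq_p2; rewrite inE adjn_osum /= eq_p1 eq_p2.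
rewrite (@adjn_geql (OG P) _ _ (leq_addr _ _)) !leq_addr !addKn.
exact: (@adjnE (OG E)).
Qed.

Lemma sum_edges_inj n a P : a <= n -> injective (@sum_edges n a P).
Proof.
move=> le_an E1 E2 eq_E; apply/setP => -[q1 q2].
have lt_q (q : 'I_(n - a)) : a + q < n by have := ltn_ord q; lia.
rewrite -(@mem_sum_edgesr n a P E1 (Ordinal (lt_q q1)) (Ordinal (lt_q q2)) q1 q2) //.
by rewrite eq_E (@mem_sum_edgesr n a P E2 _ _ q1 q2).
Qed.

Lemma sum_edges_subgraph H G n a P E : a <= n ->
  P \in subgraphs a H -> E \in subgraphs (n - a) G ->
  @sum_edges n a P E \in subgraphs n (osum H G).
Proof.
move=> le_an /imsetP [g /= incr_g ->] /imsetP [f /= incr_f ->].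
pose h : {ffun 'I_n -> 'I_(ord H + ord G)} :=
  [ffun i => match split (cast_ord (esym (subnKC le_an)) i) with
             | inl j => lshift (ord G) (g j) | inr j => rshift (ord H) (f j) end].
apply/imsetP; exists h.
  apply/incrP => i j lt_ij; rewrite !ffunE.
  case: splitP => [i1 /= eq_i | i2 /= eq_i]; case: splitP => [j1 /= eq_j | j2 /= eq_j] /=.
  - by apply/incrP => //; rewrite -eq_i -eq_j.
  - by rewrite (leq_trans (ltn_ord _)) ?leq_addr.
  - by have := ltn_ord j1; lia.
  - by rewrite ltn_add2l; apply/incrP => //; lia.
apply/setP => -[p1 p2]; rewrite !inE /= adjn_osum !ffunE.
case: splitP => [i1 /= -> | i2 /= ->]; case: splitP => [j1 /= -> | j2 /= ->] /=.
- by rewrite !adjn_induced (geq_ordF i1) (geq_ordF (g i1)).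
- rewrite (@adjn_geqr H _ _ (leq_addr _ _)) (@adjn_geqr (OG _) _ _ (leq_addr _ _)).
  by rewrite (geq_ordF i1) (geq_ordF (g i1)).
- rewrite (@adjn_geql H _ _ (leq_addr _ _)) (@adjn_geql (OG _) _ _ (leq_addr _ _)).
  by rewrite (geq_ordF j1) (geq_ordF (g j1)) !andbF.
- rewrite (@adjn_geql H _ _ (leq_addr _ _)) (@adjn_geql (OG _) _ _ (leq_addr _ _)).
  by rewrite !leq_addr !addKn adjn_induced.
Qed.

Lemma sum_edges_neq n a b P Q E E' :
  0 < a -> a < b -> b <= n -> irreducible (OG Q) ->
  @sum_edges n a P E != @sum_edges n b Q E'.
Proof.
move=> a_gt0 lt_ab le_bn /irreducibleP linQ.
have [i [j [_ _ Qij /andP [ia ja]]]] : crossed Q setT a.-1.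
  have lt_a1 : a.-1 < b := leq_ltn_trans (leq_pred a) lt_ab.
  apply: (linQ (Ordinal lt_a1) (Ordinal lt_ab) (in_setT _) (in_setT _)).
  by rewrite /= prednK // !leqnn.
have lt_n (k : 'I_b) : k < n := leq_trans (ltn_ord k) le_bn.
apply/eqP => /setP /(_ (Ordinal (lt_n i), Ordinal (lt_n j))).
have [lt_ia le_aj] : i < a /\ a <= j by lia.
rewrite !inE !adjn_osum /= (@adjnE (OG Q)) Qij.
by rewrite (@adjn_geqr (OG P) _ _ le_aj) leqNgt lt_ia.
Qed.

Lemma leq_S_osumr H G n : S n G <= S n (osum H G).
Proof.
have -> : S n G = #|subgraphs (n - 0) G| by rewrite subn0.
rewrite S_card -(card_imset _ (@sum_edges_inj n 0 set0 (leq0n n))).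
apply/subset_leq_card/subsetP => _ /imsetP [E GE ->].
exact: sum_edges_subgraph (mem_subgraphs0 _ _) GE.
Qed.

Lemma leq_sum_S_osum H G l n : irreducible H -> l <= ord H ->
  \sum_(1 <= a < (minn l n).+1) S (n - a) G <= S n (osum H G).
Proof.
move=> irrH le_lH.
pose P a := odflt set0
  [pick P : {set 'I_a * 'I_a} | (P \in subgraphs a H) && irreducible (OG P)].
have P_irr a : 0 < a <= l -> (P a \in subgraphs a H) && irreducible (OG (P a)).
  move=> a_range; rewrite /P; case: pickP => [Q // | noP].
  have [Q HQ irrQ] : exists2 Q, Q \in subgraphs a H & irreducible (OG Q).
    by apply: irreducible_subgraph; lia.
  by move: (noP Q); rewrite HQ irrQ.
pose B a := [set @sum_edges n a (P a) E | E in subgraphs (n - a) G].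
have card_B a : 1 <= a < (minn l n).+1 -> S (n - a) G = #|B a|.
  by move=> a_range; rewrite card_imset //; apply: sum_edges_inj; lia.
rewrite (eq_big_nat _ _ card_B) S_card.
apply: leq_sum_card_disjoint => [a a_range | a b a_gt0 lt_ab lt_b].
  have /andP [HPa _] : (P a \in subgraphs a H) && irreducible (OG (P a)).
    by apply: P_irr; lia.
  by apply/subsetP => _ /imsetP [E GE ->]; apply: sum_edges_subgraph HPa GE; lia.
have /andP [_ irrPb] : (P b \in subgraphs b H) && irreducible (OG (P b)).
  by apply: P_irr; lia.
rewrite disjoint_subset; apply/subsetP => _ /imsetP [E _ ->]; rewrite inE.
by apply/imsetP => -[E' _ /eqP]; apply/negP; apply: sum_edges_neq irrPb; lia.
Qed.

Lemma nth_Fseq l n i : i <= n -> nth 0 (Fseq l n) i = F (n - i) l.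
Proof. by elim: n i => [|n IH] [|i] //= le_in; rewrite IH // subSS. Qed.

Lemma F_rec l n : F n.+1 l = \sum_(1 <= a < (minn l n.+1).+1) F (n.+1 - a) l.
Proof.
have size_Fseq m : size (Fseq l m) = m.+1 by elim: m => //= m ->.
rewrite /F /= sumnE (big_nth 0) size_take size_Fseq -/(minn l n.+1) big_add1 /=.
apply: eq_big_nat => i /andP [_ lt_i]; move: lt_i; rewrite leq_min => /andP [lt_il lt_in].
by rewrite nth_take // nth_Fseq.
Qed.

Lemma leq_F_S_osums l Gs : all irreducible Gs ->
  forall n, n <= count (fun H => l <= ord H) Gs -> F n l <= S n (osums Gs).
Proof.
elim: Gs => [|H Gs IH] /= irrGs n le_n.
  by move: le_n; rewrite leqn0 => /eqP ->; apply: S0_gt0.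
case/andP: irrGs => irrH irrGs; case: n le_n => [_ | n le_n]; first exact: S0_gt0.
have [le_lH | lt_Hl] := leqP l (ord H).
  rewrite F_rec; apply: leq_trans (leq_sum_S_osum _ _ irrH le_lH).
  rewrite big_nat_cond [leqRHS]big_nat_cond; apply: leq_sum => a /andP [/andP [a_gt0 _] _].
  by apply: IH => //; move: le_n; rewrite le_lH; lia.
apply: leq_trans (leq_S_osumr H _ _); apply: IH => //.
by move: le_n; rewrite [l <= _]leqNgt lt_Hl.
Qed.

Theorem lemma15 (G : ograph) (k l : nat) (Gs : seq ograph) :
  wf G -> block_decomposition G Gs ->
  k <= count (fun H => l <= ord H) Gs ->
  forall n, n <= k -> F n l <= S n G.
Proof.
move=> _ [-> blocks] le_k n le_nk.
apply: leq_F_S_osums (leq_trans le_nk le_k).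
by apply: sub_all blocks => H /and3P [].
Qed.
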